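(* Consider the network with vertices $s_1,s_2,s_3,t$ and directed edges $(s_3,s_1),(s_3,s_2),(s_1,t),(s_2,t)$. Let $\mathcal{A}$ be a finite alphabet with $|\mathcal{A}|>1$, let $X_1^k,X_2^k,X_3^k$ be blocks of length $k$ whose $3k$ components are i.i.d. uniform on $\mathcal{A}$, and let $f:\mathcal{A}^3\to\mathcal{B}$ ($|\mathcal{B}|>1$, $f$ not constant in any of its arguments) be the demand function, applied componentwise to blocks. Define an equivalence relation on $\mathcal{A}^k$ by $\mathbf{x}_3\equiv\mathbf{x}_3'$ if and only if $f(\mathbf{x}_1,\mathbf{x}_2,\mathbf{x}_3)=f(\mathbf{x}_1,\mathbf{x}_2,\mathbf{x}_3')$ for all $(\mathbf{x}_1,\mathbf{x}_2)\in\mathcal{A}^k\times\mathcal{A}^k$, and let $g(X_3^k)$ be the equivalence class of $X_3^k$ under this relation. Then the range of $g(X_3^k)$ may be identified with a subset of $\{1,2,\ldots,|\mathcal{A}|^k\}$, and every admissible rate tuple $(R_{31},R_{32},R_1,R_2)$ satisfies $$R_{31}+R_{32}\ \ge\ \frac{H(g(X_3^k))}{k\log|\mathcal{A}|}.$$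
   Context: All logarithms are base 2 unless otherwise indicated; $H_{q}$ denotes entropy in base $q$. Source $s_j$ observes $X_j^k$; the terminal $t$ must compute $f(X_1^k,X_2^k,X_3^k)=(f(X_1^{(i)},X_2^{(i)},X_3^{(i)}))_{i=1}^k\in\mathcal{B}^k$ with zero error. Let $\mathcal{Z}$ be a finite code alphabet with $|\mathcal{Z}|>1$ and $\mathcal{Z}^*$ the set of finite-length sequences over $\mathcal{Z}$. A source-network code $\mathcal{C}_{f,k}$ consists of encoders $\phi_{(s_3,s_1)},\phi_{(s_3,s_2)}:\mathcal{A}^k\to\mathcal{Z}^*$, $\phi_{(s_1,t)},\phi_{(s_2,t)}:\mathcal{A}^k\times\mathcal{Z}^*\to\mathcal{Z}^*$, and a decoder $\psi_t:\mathcal{Z}^*\times\mathcal{Z}^*\to\mathcal{B}^k$; writing $\mathbf{Z}_{31}=\phi_{(s_3,s_1)}(X_3^k)$, $\mathbf{Z}_{32}=\phi_{(s_3,s_2)}(X_3^k)$, $\mathbf{Z}_1=\phi_{(s_1,t)}(X_1^k,\mathbf{Z}_{31})$, $\mathbf{Z}_2=\phi_{(s_2,t)}(X_2^k,\mathbf{Z}_{32})$, it is required that $\Pr\{\psi_t(\mathbf{Z}_1,\mathbf{Z}_2)\neq f(X_1^k,X_2^k,X_3^k)\}=0$. A tuple $\mathbf{R}=(R_{31},R_{32},R_1,R_2)$ is admissible if for every $\epsilon>0$ there exist a sufficiently large $k$ and such a code with $\log|\mathcal{Z}|\,\mathbb{E}\ell(\mathbf{Z}_e)\le k\log|\mathcal{A}|(R_e+\epsilon)$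 for each $e\in\{31,32,1,2\}$, where $\ell(\cdot)$ is length in symbols of $\mathcal{Z}$ and the expectation is over the messages. *)

From HB Require Import structures.
From mathcomp Require Import all_boot all_order all_algebra.
From mathcomp Require Import reals exp.
Set Implicit Arguments. Unset Strict Implicit. Unset Printing Implicit Defensive.
Import Order.TTheory GRing.Theory Num.Theory.
Local Open Scope ring_scope.

Definition log2 {R : realType} (x : R) : R := ln x / ln 2.

Definition blk (A : finType) (k : nat) := {ffun 'I_k -> A}.

Definition fblk (A B : finType) (f : A -> A -> A -> B) (k : nat)
  (x1 x2 x3 : blk A k) : {ffun 'I_k -> B} :=
  [ffun i => f (x1 i) (x2 i) (x3 i)].

Definition nonconst_each (A B : finType) (f : A -> A -> A -> B) : Prop :=
  [/\ (exists a a' b c, f a b c != f a' b c),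
      (exists a b b' c, f a b c != f a b' c) &
      (exists a b c c', f a b c != f a b c')].

Definition fequiv (A B : finType) (f : A -> A -> A -> B) (k : nat)
  (x3 y3 : blk A k) : bool :=
  [forall x1 : blk A k, forall x2 : blk A k, fblk f x1 x2 x3 == fblk f x1 x2 y3].

Definition gclass (A B : finType) (f : A -> A -> A -> B) (k : nat)
  (x3 : blk A k) : {set blk A k} := [set y | fequiv f x3 y].

Definition prob_unif (R : realType) (T : finType) (E : {set T}) : R :=
  #|E|%:R / #|T|%:R.

Definition entropy_unif (R : realType) (T U : finType) (g : T -> U) : R :=
  - \sum_(u : U)
      (let p := prob_unif R [set t | g t == u] in
       if p == 0 then 0 else p * log2 p).

(* A source-network code for the network s3->s1, s3->s2, s1->t, s2->t,
   with block length n and code alphabet Z *)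
Record snc (A B Z : finType) (n : nat) := SNC {
  phi31 : blk A n -> seq Z;
  phi32 : blk A n -> seq Z;
  phi1  : blk A n -> seq Z -> seq Z;
  phi2  : blk A n -> seq Z -> seq Z;
  psi   : seq Z -> seq Z -> {ffun 'I_n -> B}
}.

Section Code.
Variables (A B Z : finType) (n : nat) (C : snc A B Z n).
Definition msgZ31 (x : blk A n * blk A n * blk A n) := phi31 C x.2.
Definition msgZ32 (x : blk A n * blk A n * blk A n) := phi32 C x.2.
Definition msgZ1 (x : blk A n * blk A n * blk A n) := phi1 C x.1.1 (phi31 C x.2).
Definition msgZ2 (x : blk A n * blk A n * blk A n) := phi2 C x.1.2 (phi32 C x.2).
End Code.

Definition err_prob (R : realType) (A B Z : finType) (f : A -> A -> A -> B)
  (n : nat) (C : snc A B Z n) : R :=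
  prob_unif R [set x : blk A n * blk A n * blk A n |
                 psi C (msgZ1 C x) (msgZ2 C x) != fblk f x.1.1 x.1.2 x.2].

Definition exp_len (R : realType) (A Z : finType) (n : nat)
  (m : blk A n * blk A n * blk A n -> seq Z) : R :=
  (\sum_(x : blk A n * blk A n * blk A n) (size (m x))%:R)
    / #|{: blk A n * blk A n * blk A n}|%:R.

Definition admissible {R : realType} (A B Z : finType) (f : A -> A -> A -> B)
  (R31 R32 R1 R2 : R) : Prop :=
  forall eps : R, 0 < eps -> forall N : nat, exists n : nat, (N <= n)%N /\
    exists C : snc A B Z n,
      err_prob R f C = 0 /\
      log2 #|Z|%:R * exp_len R (msgZ31 C) <= n%:R * log2 #|A|%:R * (R31 + eps) /\
      log2 #|Z|%:R * exp_len R (msgZ32 C) <= n%:R * log2 #|A|%:R * (R32 + eps) /\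
      log2 #|Z|%:R * exp_len R (msgZ1 C)  <= n%:R * log2 #|A|%:R * (R1 + eps) /\
      log2 #|Z|%:R * exp_len R (msgZ2 C)  <= n%:R * log2 #|A|%:R * (R2 + eps).

From HB Require Import structures.
From mathcomp Require Import all_boot all_order all_algebra.
From mathcomp Require Import reals sequences exp.
From mathcomp Require Import ring lra.
Set Implicit Arguments. Unset Strict Implicit. Unset Printing Implicit Defensive.
Import Order.TTheory GRing.Theory Num.Theory.
Local Open Scope ring_scope.

(* The classes of the relation are products of single-letter classes, so
   H(g(X_3^n)) = n H_1 for every block length n, where H_1 is the entropy of the
   class of a single letter.  In a zero-error code the terminal computes
   f(x_1, x_2, x_3) for all x_1, x_2 from messages that depend on x_3 only through
   (Z_31, Z_32); hence this pair of words determines g(X_3^n).  The words need not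
   be prefix-free, but weighting a pair of words of lengths l_1, l_2 by
   (1 - r)^2 (r / |Z|)^(l_1 + l_2) still gives a Kraft sum at most 1, so Gibbs'
   inequality yields
     n H_1 <= (E l_31 + E l_32) log2 (|Z| / r) - 2 log2 (1 - r).
   Dividing by n log2 |A| and letting n -> oo, then r -> 1 and eps -> 0, gives the
   bound. *)

Section KernelClass.
Variables (T : finType) (U : eqType) (F : T -> U).

Definition kernel_class (t : T) : {set T} := [set u | F t == F u].

Lemma kernel_class_refl t : t \in kernel_class t.
Proof. by rewrite inE. Qed.

Lemma eq_kernel_class t u : (kernel_class u == kernel_class t) = (u \in kernel_class t).
Proof.
apply/eqP/idP => [<-|]; first exact: kernel_class_refl.
by rewrite inE => /eqP Ftu; apply/setP => v; rewrite !inE Ftu.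
Qed.

End KernelClass.

Section BlockClasses.
Variables (A B : finType) (f : A -> A -> A -> B).

Definition letter_class : A -> {set A} :=
  kernel_class (fun a => [ffun p : A * A => f p.1 p.2 a]).

Lemma gclassE k : @gclass A B f k =1 kernel_class (fun x : blk A k =>
  [ffun p : blk A k * blk A k => fblk f p.1 p.2 x]).
Proof.
move=> x; apply/setP => y; rewrite !inE; apply/forallP/eqP => [xy|xy x1].
  by apply/ffunP => -[x1 x2]; rewrite !ffunE; apply/eqP/(forallP (xy x1)).
by apply/forallP => x2; move/ffunP/(_ (x1, x2)): xy; rewrite !ffunE => ->.
Qed.

Lemma gclass_refl k (x : blk A k) : x \in gclass f x.
Proof. by rewrite gclassE kernel_class_refl. Qed.

Lemma eq_gclass k (x y : blk A k) : (gclass f y == gclass f x) = (y \in gclass f x).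
Proof. by rewrite !gclassE eq_kernel_class. Qed.

Lemma gclass_setXn k (x : blk A k) :
  gclass f x = setXn (fun i => letter_class (x i)).
Proof.
apply/setP => y; rewrite inE in_setXn; apply/forallP/forallP => [xy i|xy x1].
  rewrite inE; apply/eqP/ffunP => -[a1 a2]; rewrite !ffunE /=.
  by have /forallP/(_ [ffun=> a2])/eqP/ffunP/(_ i) := xy [ffun=> a1]; rewrite !ffunE.
apply/forallP => x2; apply/eqP/ffunP => i; rewrite !ffunE.
by have := xy i; rewrite inE => /eqP/ffunP/(_ (x1 i, x2 i)); rewrite !ffunE.
Qed.

End BlockClasses.

Section Entropy.
Variable R : realType.

Lemma ln_prod (I : finType) (F : I -> R) :
  (forall i, 0 < F i) -> ln (\prod_i F i) = \sum_i ln (F i).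
Proof.
move=> F_gt0; have [] : 0 < \prod_i F i /\ ln (\prod_i F i) = \sum_i ln (F i) => //.
apply: (big_ind2 (fun x y => 0 < x /\ ln x = y)) => [|x1 y1 x2 y2 [x1_gt0 <-] [x2_gt0 <-]|i _].
- by rewrite ln1.
- by rewrite lnM ?mulr_gt0.
- by split.
Qed.

Lemma log2_prod (I : finType) (F : I -> R) :
  (forall i, 0 < F i) -> log2 (\prod_i F i) = \sum_i log2 (F i).
Proof. by move=> F_gt0; rewrite /log2 ln_prod // mulr_suml. Qed.

Lemma entropy_unifE (T U : finType) (g : T -> U) :
  entropy_unif R g = - (\sum_t log2 (prob_unif R [set u | g u == g t])) / #|T|%:R.
Proof.
rewrite /entropy_unif mulNr mulr_suml (partition_big g xpredT) //=; congr (- _).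
apply: eq_bigr => u _.
under eq_bigr => t /eqP gtu do rewrite gtu.
set p := prob_unif R _.
have -> : (if p == 0 then 0 else p * log2 p) = p * log2 p by case: eqP => // ->; rewrite mul0r.
rewrite sumr_const -[_ *+ _]mulr_natl mulrC mulrCA; congr (_%:R * _).
by apply: eq_card => t; rewrite inE.
Qed.

Lemma entropy_unif_classes (T : finType) (g : T -> {set T}) :
  (forall t u, (g u == g t) = (u \in g t)) ->
  entropy_unif R g = - (\sum_t log2 (#|g t|%:R / #|T|%:R)) / #|T|%:R.
Proof.
move=> g_class; rewrite entropy_unifE; congr (- _ / _); apply: eq_bigr => t _.
by congr (log2 (_%:R / _)); apply: eq_card => u; rewrite inE g_class.
Qed.

Lemma sum_ffun_coord (I A : finType) (i : I) (phi : A -> R) :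
  \sum_(t : {ffun I -> A}) phi (t i) = #|A|%:R ^+ #|I|.-1 * \sum_a phi a.
Proof.
pose G j a := if j == i then phi a else 1.
have -> : \sum_(t : {ffun I -> A}) phi (t i) = \sum_(t : {ffun I -> A}) \prod_j G j (t j).
  apply: eq_bigr => t _; rewrite (bigD1 i) //= /G eqxx big1 ?mulr1 //.
  by move=> j /negbTE ->.
rewrite -bigA_distr_bigA (bigD1 i) //= /G eqxx mulrC; congr (_ * _).
rewrite (eq_bigr (fun=> #|A|%:R)) => [|j /negbTE ->]; last by rewrite sumr_const.
by rewrite prodr_const cardC1.
Qed.

Lemma entropy_gclass (A B : finType) (f : A -> A -> A -> B) (n : nat) :
  (0 < #|A|)%N ->
  entropy_unif R (@gclass A B f n) = n%:R * entropy_unif R (letter_class f).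
Proof.
move=> A_gt0; rewrite (entropy_unif_classes (@eq_gclass _ _ f n)).
rewrite (entropy_unif_classes (g := letter_class f) (eq_kernel_class _)).
pose phi a := log2 (#|letter_class f a|%:R / #|A|%:R : R).
have log2_class t : log2 (#|@gclass A B f n t|%:R / #|{: blk A n}|%:R) = \sum_i phi (t i).
  rewrite gclass_setXn cardsXn card_ffun card_ord natr_prod natrX.
  rewrite -[X in _ ^+ X]card_ord -prodr_const.
  rewrite -prodf_div log2_prod // => i; rewrite divr_gt0 ?ltr0n //.
  by apply/card_gt0P; exists (t i); exact: kernel_class_refl.
under eq_bigr do rewrite log2_class.
rewrite exchange_big /=; under eq_bigr do rewrite sum_ffun_coord card_ord.
rewrite sumr_const card_ord card_ffun card_ord.
have [->|n_gt0] := posnP n; first by rewrite !mulr0n oppr0 !mul0r.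
rewrite -[_ *+ n]mulr_natl natrX -(prednK n_gt0) exprS /=.
have A_neq0 : #|A|%:R != 0 :> R by rewrite pnatr_eq0 -lt0n.
by field; rewrite A_neq0 expf_neq0.
Qed.

End Entropy.

Section Gibbs.
Variable R : realType.

Lemma ln_le_subr1 (x : R) : 0 < x -> ln x <= x - 1.
Proof. by move=> x_gt0; have := @le_ln1Dx R (x - 1); rewrite subrKC; apply; lra. Qed.

Lemma gibbs_log2 (T : finType) (q m : T -> R) :
  (forall t, 0 < q t) -> (forall t, 0 < m t) -> \sum_t q t / m t <= 1 ->
  \sum_t log2 (q t) <= \sum_t log2 (m t / #|T|%:R).
Proof.
move=> q_gt0 m_gt0 kraft.
suff : \sum_t ln (q t) <= \sum_t ln (m t / #|T|%:R).
  by rewrite /log2 -!mulr_suml ler_pM2r // invr_gt0 ln_gt0 // ltr1n.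
have [t0 _|T0] := pickP (xpredT : pred T); last by rewrite !big_pred0.
have N_gt0 : (0 : R) < #|T|%:R by rewrite ltr0n; apply/card_gt0P; exists t0.
have ln_ratio t : 1 - q t * #|T|%:R / m t <= ln (m t / #|T|%:R) - ln (q t).
  have := ln_le_subr1 (x := q t * #|T|%:R / m t).
  rewrite !ln_div ?lnM ?posrE ?mulr_gt0 ?divr_gt0 ?invr_gt0 // => /(_ isT); lra.
rewrite -subr_ge0 -sumrB; apply: le_trans (ler_sum _ (fun t _ => ln_ratio t)).
under eq_bigr do rewrite mulrAC.
by rewrite sumrB sumr_const -mulr_suml subr_ge0 ler_piMl.
Qed.

End Gibbs.

Lemma geometric_partial_sum (R : pzRingType) (r : R) (M : nat) :
  (1 - r) * \sum_(i < M) r ^+ i = 1 - r ^+ M.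
Proof. by rewrite -opprB mulNr -subrX1 opprB. Qed.

Section WordBounds.
Variables (R : realType) (T Z : finType) (g : T -> {set T}) (w1 w2 : T -> seq Z).
Hypothesis g_refl : forall t, t \in g t.
Hypothesis g_words : forall t t', w1 t = w1 t' -> w2 t = w2 t' -> g t = g t'.

Lemma sum_inv_card_le (U : finType) (E : pred T) (tau : T -> U) :
  {in E &, forall t t', tau t = tau t' -> g t = g t'} ->
  \sum_(t | E t) (#|g t|%:R : R)^-1 <= #|U|%:R.
Proof.
move=> g_tau; rewrite (partition_big tau xpredT) //= -sum1_card natr_sum.
apply: ler_sum => u _.
have [t0 /andP[Et0 /eqP tau_t0]|fiber0] := pickP [pred t | E t && (tau t == u)]; last first.
  by rewrite big_pred0 ?ler01.
have fiber_g t : E t && (tau t == u) -> g t = g t0.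
  by case/andP=> Et /eqP tau_t; apply: g_tau; rewrite ?tau_t.
rewrite (eq_bigr (fun=> (#|g t0|%:R)^-1)) => [|t /fiber_g ->] //.
have g_t0_gt0 : (0 : R) < #|g t0|%:R by rewrite ltr0n card_gt0; apply/set0Pn; exists t0.
rewrite sumr_const -[_ *+ _]mulr_natl ler_pdivrMr // mul1r ler_nat.
by apply/subset_leq_card/subsetP => t /fiber_g <-.
Qed.

Lemma sum_inv_card_sizes (z0 : Z) (L1 L2 : nat) :
  \sum_(t | (size (w1 t) == L1) && (size (w2 t) == L2)) (#|g t|%:R : R)^-1
    <= (#|Z| ^ (L1 + L2))%:R.
Proof.
pose tau t : {ffun 'I_L1 -> Z} * {ffun 'I_L2 -> Z} :=
  ([ffun i : 'I_L1 => nth z0 (w1 t) i], [ffun i : 'I_L2 => nth z0 (w2 t) i]).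
have := @sum_inv_card_le _ (fun t => (size (w1 t) == L1) && (size (w2 t) == L2)) tau.
rewrite card_prod !card_ffun !card_ord -expnD; apply.
move=> t t' /andP[/eqP s1 /eqP s2] /andP[/eqP s1' /eqP s2'] [/ffunP e1 /ffunP e2].
apply: g_words; apply: (@eq_from_nth _ z0).
- by rewrite s1 s1'.
- by move=> i; rewrite s1 => i_lt; have := e1 (Ordinal i_lt); rewrite !ffunE.
- by rewrite s2 s2'.
- by move=> i; rewrite s2 => i_lt; have := e2 (Ordinal i_lt); rewrite !ffunE.
Qed.

(* Words of lengths (l_1, l_2) meet at most |Z|^(l_1 + l_2) classes, which cancels
   the factor |Z|^-(l_1 + l_2); the remaining weights sum to
   ((1 - r) \sum_(i < M) r^i)^2 <= 1. *)
Lemma kraft_words (z0 : Z) (r : R) : 0 <= r <= 1 ->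
  \sum_t (1 - r) ^+ 2 * (r / #|Z|%:R) ^+ (size (w1 t) + size (w2 t)) / #|g t|%:R <= 1.
Proof.
case/andP=> r_ge0 r_le1.
have Z_gt0 : (0 : R) < #|Z|%:R by rewrite ltr0n; apply/card_gt0P; exists z0.
pose M := (\max_t (size (w1 t) + size (w2 t))).+1.
have size_lt t : (size (w1 t) < M)%N /\ (size (w2 t) < M)%N.
  have le_max := @leq_bigmax _ (fun t => (size (w1 t) + size (w2 t))%N) t.
  by rewrite !ltnS; split; apply: leq_trans le_max; rewrite ?leq_addr ?leq_addl.
pose lengths t : 'I_M * 'I_M := (inord (size (w1 t)), inord (size (w2 t))).
rewrite (partition_big lengths xpredT) //=.
apply: (@le_trans _ _ (\sum_(j : 'I_M * 'I_M) (1 - r) ^+ 2 * (r ^+ j.1 * r ^+ j.2))).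
  apply: ler_sum => -[i j] _ /=.
  have fiber t : (lengths t == (i, j)) = (size (w1 t) == i) && (size (w2 t) == j).
    by have [lt1 lt2] := size_lt t; rewrite xpair_eqE -!val_eqE /= !inordK.
  rewrite (eq_bigl _ _ fiber).
  rewrite (eq_bigr (fun t => (1 - r) ^+ 2 * (r / #|Z|%:R) ^+ (i + j) * (#|g t|%:R)^-1));
    last by move=> t /andP[/eqP <- /eqP <-].
  rewrite -mulr_sumr; apply: le_trans (ler_wpM2l _ (sum_inv_card_sizes z0 i j)) _.
    by rewrite mulr_ge0 ?exprn_ge0 ?divr_ge0 ?subr_ge0 // ltW.
  by rewrite natrX -mulrA -exprMn divfK ?exprD // gt_eqF.
have -> : \sum_(j : 'I_M * 'I_M) (1 - r) ^+ 2 * (r ^+ j.1 * r ^+ j.2)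
          = ((1 - r) * \sum_(i < M) r ^+ i) ^+ 2.
  rewrite exprMn -mulr_sumr; congr (_ * _).
  rewrite expr2 mulr_suml -(pair_bigA _ (fun i j : 'I_M => r ^+ i * r ^+ j)) /=.
  by apply: eq_bigr => i _; rewrite mulr_sumr.
rewrite geometric_partial_sum exprn_ile1 // ?subr_ge0 ?gerBl ?exprn_ge0 //.
by rewrite exprn_ile1.
Qed.

Lemma entropy_words_bound (z0 : Z) (r : R) : (0 < #|T|)%N -> 0 < r < 1 ->
  - (\sum_t log2 (#|g t|%:R / #|T|%:R)) / #|T|%:R <=
  (\sum_t (size (w1 t) + size (w2 t))%:R) / #|T|%:R * log2 (#|Z|%:R / r)
    - 2 * log2 (1 - r).
Proof.
move=> T_gt0 /andP[r_gt0 r_lt1].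
have Z_gt0 : (0 : R) < #|Z|%:R by rewrite ltr0n; apply/card_gt0P; exists z0.
pose q t := (1 - r) ^+ 2 * (r / #|Z|%:R) ^+ (size (w1 t) + size (w2 t)).
have q_gt0 t : 0 < q t by rewrite mulr_gt0 ?exprn_gt0 ?divr_gt0 ?subr_gt0.
have log2_q t : log2 (q t) =
    2 * log2 (1 - r) - (size (w1 t) + size (w2 t))%:R * log2 (#|Z|%:R / r).
  rewrite /q; move: (size (w1 t) + size (w2 t))%N => n.
  rewrite /log2 lnM ?posrE ?exprn_gt0 ?divr_gt0 ?subr_gt0 // !lnXn ?divr_gt0 ?subr_gt0 //.
  rewrite !ln_div ?posrE // -[_ *+ 2]mulr_natl -[_ *+ n]mulr_natl.
  ring.
have card_gt0 t : (0 : R) < #|g t|%:R by rewrite ltr0n card_gt0; apply/set0Pn; exists t.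
have r01 : 0 <= r <= 1 by rewrite !ltW.
have := gibbs_log2 q_gt0 card_gt0 (kraft_words z0 r01).
have N_neq0 : #|T|%:R != 0 :> R by rewrite pnatr_eq0 -lt0n.
have mean_log2_q : - (\sum_t log2 (q t)) / #|T|%:R =
    (\sum_t (size (w1 t) + size (w2 t))%:R) / #|T|%:R * log2 (#|Z|%:R / r)
      - 2 * log2 (1 - r).
  rewrite (eq_bigr _ (fun t _ => log2_q t)) sumrB sumr_const -mulr_suml -[_ *+ _]mulr_natr.
  by field.
by rewrite -mean_log2_q ler_pM2r ?invr_gt0 ?ltr0n // lerN2.
Qed.

End WordBounds.

Lemma prob_unif_eq0 (R : realType) (T : finType) (E : {set T}) :
  prob_unif R E = 0 -> E = set0.
Proof.
rewrite /prob_unif => /eqP; rewrite mulf_eq0 invr_eq0 !pnatr_eq0 => /orP[|/eqP T0].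
  by rewrite cards_eq0 => /eqP.
by apply/eqP; rewrite -cards_eq0 -leqn0 -T0 max_card.
Qed.

Lemma mean_snd (R : realFieldType) (T1 T2 : finType) (F : T2 -> R) : (0 < #|T1|)%N ->
  (\sum_(x : T1 * T2) F x.2) / #|{: T1 * T2}|%:R = (\sum_t F t) / #|T2|%:R.
Proof.
move=> T1_gt0; rewrite -(pair_bigA _ (fun _ t => F t)) sumr_const card_prod natrM.
rewrite -[(\sum_t F t) *+ _]mulr_natl invfM mulrACA mulfV ?mul1r //.
by rewrite pnatr_eq0 -lt0n.
Qed.

Lemma exp_len_snd (R : realType) (A Z : finType) (n : nat) (m : blk A n -> seq Z) :
  (0 < #|A|)%N ->
  exp_len R (fun x => m x.2) = (\sum_t (size (m t))%:R) / #|{: blk A n}|%:R.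
Proof.
move=> A_gt0; rewrite /exp_len (mean_snd (fun t => (size (m t))%:R)) //.
by rewrite card_prod muln_gt0 card_ffun card_ord expn_gt0 A_gt0.
Qed.

Section ZeroErrorCode.
Variables (R : realType) (A B Z : finType) (f : A -> A -> A -> B) (n : nat).
Variable C : snc A B Z n.
Hypothesis zero_error : err_prob R f C = 0.

Lemma zero_error_decode x1 x2 x3 :
  psi C (phi1 C x1 (phi31 C x3)) (phi2 C x2 (phi32 C x3)) = fblk f x1 x2 x3.
Proof.
have /setP/(_ (x1, x2, x3)) := prob_unif_eq0 zero_error.
by rewrite !inE => /negbFE/eqP.
Qed.

Lemma zero_error_gclass t t' :
  phi31 C t = phi31 C t' -> phi32 C t = phi32 C t' -> gclass f t = gclass f t'.
Proof.
move=> e31 e32; rewrite !gclassE; apply/setP => u; rewrite !inE.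
have -> // : [ffun p : blk A n * blk A n => fblk f p.1 p.2 t] =
             [ffun p : blk A n * blk A n => fblk f p.1 p.2 t'].
by apply/ffunP => p; rewrite !ffunE -!zero_error_decode e31 e32.
Qed.

Lemma entropy_gclass_le_exp_len (r : R) : (0 < #|A|)%N -> (0 < #|Z|)%N -> 0 < r < 1 ->
  entropy_unif R (@gclass A B f n) <=
  (exp_len R (msgZ31 C) + exp_len R (msgZ32 C)) * log2 (#|Z|%:R / r) - 2 * log2 (1 - r).
Proof.
move=> A_gt0 /card_gt0P[z0 _] r01.
have blk_gt0 : (0 < #|{: blk A n}|)%N by rewrite card_ffun card_ord expn_gt0 A_gt0.
rewrite (entropy_unif_classes R (@eq_gclass _ _ f n)).
apply: le_trans (entropy_words_bound (@gclass_refl _ _ f n) zero_error_gclass z0 blk_gt0 r01) _.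
rewrite (exp_len_snd R (phi31 C)) // (exp_len_snd R (phi32 C)) // -mulrDl -big_split /=.
by under eq_bigr do rewrite natrD.
Qed.

End ZeroErrorCode.

Lemma le_of_le_addr_mul (R : realFieldType) (x y m : R) :
  (forall e, 0 < e -> x <= y + m * e) -> x <= y.
Proof.
move=> le_xy; apply/ler_addgt0Pr => e e_gt0.
have norm_gt0 : 0 < `|m| + 1 by rewrite ltr_pwDr ?normr_ge0.
apply: le_trans (le_xy _ (divr_gt0 e_gt0 norm_gt0)) _; rewrite lerD2l mulrA.
rewrite ler_pdivrMr //; have := ler_norm m; nra.
Qed.

Lemma le_of_le_addr_divn (R : archiRealFieldType) (x y c : R) :
  (forall N, exists2 n, (N <= n)%N & x <= y + c / n%:R) -> x <= y.
Proof.
move=> le_xy; apply: (@le_of_le_addr_mul _ x y 1) => e e_gt0.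
have bound_ge0 : 0 <= `|c| / e by rewrite divr_ge0 ?normr_ge0 // ltW.
have [n N_le_n x_le] := le_xy (Num.bound (`|c| / e)).
have n_gt : `|c| / e < n%:R by apply: lt_le_trans (archi_boundP bound_ge0) _; rewrite ler_nat.
have n_gt0 : 0 < n%:R :> R by apply: le_lt_trans n_gt.
apply: le_trans x_le _; rewrite mul1r lerD2l ler_pdivrMr //.
move: n_gt; rewrite ltr_pdivrMr // => n_gt; have := ler_norm c; nra.
Qed.

Lemma log2_gt0 (R : realType) (T : finType) : (1 < #|T|)%N -> (0 : R) < log2 #|T|%:R.
Proof. by move=> hT; rewrite divr_gt0 // ln_gt0 // ltr1n. Qed.

Section Rates.
Variables (R : realType) (A B Z : finType) (f : A -> A -> A -> B).
Hypotheses (hA : (1 < #|A|)%N) (hZ : (1 < #|Z|)%N).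

Lemma letter_entropy_le_rates (n : nat) (C : snc A B Z n) (R31 R32 eps e : R) :
  (0 < n)%N -> 0 < e -> err_prob R f C = 0 ->
  log2 #|Z|%:R * exp_len R (msgZ31 C) <= n%:R * log2 #|A|%:R * (R31 + eps) ->
  log2 #|Z|%:R * exp_len R (msgZ32 C) <= n%:R * log2 #|A|%:R * (R32 + eps) ->
  entropy_unif R (letter_class f) / log2 #|A|%:R <=
  (R31 + R32 + 2 * eps) * (1 + e)
    + (- 2 * log2 (1 - expR (- (e * ln #|Z|%:R)))) / log2 #|A|%:R / n%:R.
Proof.
move=> n_gt0 e_gt0 zero_error h31 h32.
set a := log2 #|A|%:R in h31 h32 *; set b := log2 #|Z|%:R in h31 h32.
set r := expR _.
(* r = |Z|^(-e), chosen so that log2 (|Z| / r) = (1 + e) log2 |Z|. *)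
have a_gt0 : 0 < a := log2_gt0 R hA.
have lnZ_gt0 : (0 : R) < ln #|Z|%:R by rewrite ln_gt0 // ltr1n.
have r01 : 0 < r < 1 by rewrite expR_gt0 expR_lt1 oppr_lt0 mulr_gt0.
have log2_Zr : log2 (#|Z|%:R / r) = (1 + e) * b.
  rewrite /log2 ln_div ?posrE ?expR_gt0 ?ltr0n ?(ltnW hZ) // expRK /b /log2; ring.
have := entropy_gclass_le_exp_len zero_error (ltnW hA) (ltnW hZ) r01.
rewrite entropy_gclass ?(ltnW hA) // log2_Zr.
set H := entropy_unif R _; set D := - 2 * log2 (1 - r) => bound.
have nR_gt0 : (0 : R) < n%:R by rewrite ltr0n.
have key : n%:R * H <= n%:R * a * ((R31 + R32 + 2 * eps) * (1 + e)) + D.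
  apply: le_trans bound _; rewrite /D.
  have e1_ge0 : 0 <= 1 + e by lra.
  have := ler_wpM2l e1_ge0 (lerD h31 h32).
  nra.
rewrite -(ler_pM2r (mulr_gt0 nR_gt0 a_gt0)) mulrDl.
have -> : H / a * (n%:R * a) = n%:R * H by field; rewrite gt_eqF.
have -> : D / a / n%:R * (n%:R * a) = D by field; rewrite !gt_eqF.
by rewrite [X in _ <= X + _]mulrC.
Qed.

End Rates.

Theorem lemma2 (R : realType) (A B Z : finType) (f : A -> A -> A -> B)
  (hA : (1 < #|A|)%N) (hB : (1 < #|B|)%N) (hZ : (1 < #|Z|)%N)
  (hf : nonconst_each f)
  (R31 R32 R1 R2 : R) (hadm : @admissible R A B Z f R31 R32 R1 R2)
  (k : nat) (hk : (0 < k)%N) :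
  entropy_unif R (@gclass A B f k) / (k%:R * log2 #|A|%:R) <= R31 + R32.
Proof.
have a_gt0 := log2_gt0 R hA.
rewrite entropy_gclass ?(ltnW hA) //.
have -> : k%:R * entropy_unif R (letter_class f) / (k%:R * log2 #|A|%:R) =
          entropy_unif R (letter_class f) / log2 #|A|%:R.
  by field; rewrite !gt_eqF ?ltr0n.
apply: (le_of_le_addr_mul (m := 2)) => eps eps_gt0.
apply: (le_of_le_addr_mul (m := R31 + R32 + 2 * eps)) => e e_gt0.
apply: le_of_le_addr_divn => N.
have [n [N_lt_n [C [zero_error [h31 [h32 _]]]]]] := hadm eps eps_gt0 N.+1.
exists n; first exact: ltnW.
rewrite -{1}[R31 + R32 + 2 * eps]mulr1 -mulrDr.
exact (letter_entropy_le_rates hA hZ (leq_ltn_trans (leq0n N) N_lt_n) e_gt0 zero_error h31 h32).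
Qed.
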